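(* Let $(X,\beta)$ be a locally finite prechart and $x,y\in X$ with $x\not\sim y$. Then there exists $i\in\mathbb{N}$ such that $\Phi^{(i)}_\beta(x,y)=\Phi^{(i+1)}_\beta(x,y)$.
   Context: Fix a set $V=\{v_1,v_2,\dots\}$ of variables and a set $\Sigma$ of letters. A prechart is a pair $(X,\beta)$ with $\beta:X\to P_{\mathrm{fin}}(\Sigma\times X+V)$; write $x\xrightarrow{a}x'$ iff $(a,x')\in\beta(x)$ and $E(x)=\beta(x)\cap V$. It is locally finite if from each state only finitely many states are reachable. A bisimulation is a relation $R\subseteq X\times X$ such that whenever $(x,y)\in R$: $E(x)=E(y)$; each $x\xrightarrow{a}x'$ is matched by some $y\xrightarrow{a}y'$ with $(x',y')\in R$; and symmetrically; $x\sim y$ iff related by some bisimulation. A 1-bounded pseudometric on $X$ is $d:X\times X\to[0,1]$ with $d(x,x)=0$, symmetry and triangle inequality. The discrete pseudometric is $\top(x,y)=0$ if $x=y$, $1$ otherwise. For a pseudometric $d$, $d^\uparrow$ on $\Sigma\times X+V$ is $d^\uparrow((a,x),(a,y))=\tfrac12 d(x,y)$, $d^\uparrow(m,n)=0$ if $m=n$, $1$ otherwise. $\mathcal H(d)(A,B)=\max\{\sup_{x\in A}\inf_{y\in B}d(x,y),\sup_{y\in B}\inf_{x\in A}d(y,x)\}$ with $\sup\emptyset=0$, $\inf\emptyset=1$. $\Phi_\beta(d)(x,y)=\mathcal H(d^\uparrow)(\beta(x),\beta(y))$; $\Phi^{(0)}_\beta=\top$, $\Phi^{(i+1)}_\beta=\Phi_\beta(\Phi^{(i)}_\beta)$.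 *)

From Stdlib Require Import Reals List ClassicalEpsilon.
Import ListNotations.
Open Scope R_scope.

(* Variables V = {v_1, v_2, ...} are represented by nat.
   A finite subset of Sigma * X + V is represented by a list (membership = In);
   all notions below depend only on membership. *)
Definition prechart (Sigma X : Type) := X -> list ((Sigma * X) + nat).

Section Prechart.
Context {Sigma X : Type} (beta : prechart Sigma X).

Definition trans (x : X) (a : Sigma) (x' : X) : Prop := In (inl (a, x')) (beta x).

Inductive reach : X -> X -> Prop :=
| reach_refl x : reach x x
| reach_step x a x' y : trans x a x' -> reach x' y -> reach x y.

Definition locally_finite : Prop :=
  forall x, exists l : list X, forall y, reach x y -> In y l.

(* E(x) = beta(x) ∩ V, compared as sets *)
Definition bisimulation (Rel : X -> X -> Prop) : Prop :=
  forall x y, Rel x y ->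
    (forall v : nat, In (inr v) (beta x) <-> In (inr v) (beta y)) /\
    (forall a x', trans x a x' -> exists y', trans y a y' /\ Rel x' y') /\
    (forall a y', trans y a y' -> exists x', trans x a x' /\ Rel x' y').

Definition bisimilar (x y : X) : Prop :=
  exists Rel, bisimulation Rel /\ Rel x y.

End Prechart.

Definition dec01 (P : Prop) : R :=
  if excluded_middle_informative P then 0 else 1.

Definition top_metric {X : Type} (x y : X) : R := dec01 (x = y).

Definition lift {Sigma X : Type} (d : X -> X -> R)
  (m n : (Sigma * X) + nat) : R :=
  match m, n with
  | inl (a, x), inl (b, y) =>
      if excluded_middle_informative (a = b) then d x y / 2 else 1
  | _, _ => dec01 (m = n)
  end.

Fixpoint sup_list {B : Type} (f : B -> R) (l : list B) : R :=
  match l with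
  | [] => 0
  | [b] => f b
  | b :: l' => Rmax (f b) (sup_list f l')
  end.

Fixpoint inf_list {B : Type} (f : B -> R) (l : list B) : R :=
  match l with
  | [] => 1
  | [b] => f b
  | b :: l' => Rmin (f b) (inf_list f l')
  end.

Definition hausdorff {B : Type} (d : B -> B -> R) (A C : list B) : R :=
  Rmax (sup_list (fun a => inf_list (fun c => d a c) C) A)
       (sup_list (fun c => inf_list (fun a => d c a) A) C).

Definition Phi {Sigma X : Type} (beta : prechart Sigma X)
  (d : X -> X -> R) (x y : X) : R :=
  hausdorff (lift d) (beta x) (beta y).

Fixpoint Phi_iter {Sigma X : Type} (beta : prechart Sigma X) (i : nat)
  : X -> X -> R :=
  match i with
  | O => top_metric
  | S i' => Phi beta (Phi_iter beta i')
  end.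

From Stdlib Require Import Reals List.
From Stdlib Require Import Lra Lia Classical ClassicalEpsilon.
Open Scope R_scope.

(* Every approximant takes values in {0} ∪ {1/2^k}, and the approximants decrease.
   So if Phi^(i)(x,y) never stabilises it decreases strictly, forcing
   Phi^(i)(x,y) <= 1/2^i.  On the other hand, the pairs (u,v) whose
   approximants become arbitrarily small form a bisimulation: transitions are
   matched because each beta(u) is finite, so if no a-successor of v stayed
   close to a given a-successor of u, a uniform positive gap would keep the
   Hausdorff distance away from 0.  Hence x and y would be bisimilar. *)

Section ListExtrema.
Context {B : Type}.

Lemma sup_list_closed (P : R -> Prop) (f : B -> R) l :
  P 0 -> (forall b, In b l -> P (f b)) -> P (sup_list f l).
Proof.
  intros H0 H. induction l as [|b l IH]; simpl; auto.
  destruct l as [|c l]; [apply H; simpl; auto|].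
  unfold Rmax; destruct Rle_dec.
  - apply IH; intros; apply H; simpl in *; tauto.
  - apply H; simpl; auto.
Qed.

Lemma inf_list_closed (P : R -> Prop) (f : B -> R) l :
  P 1 -> (forall b, In b l -> P (f b)) -> P (inf_list f l).
Proof.
  intros H1 H. induction l as [|b l IH]; simpl; auto.
  destruct l as [|c l]; [apply H; simpl; auto|].
  unfold Rmin; destruct Rle_dec.
  - apply H; simpl; auto.
  - apply IH; intros; apply H; simpl in *; tauto.
Qed.

Lemma sup_list_ge (f : B -> R) l b : In b l -> f b <= sup_list f l.
Proof.
  induction l as [|c l IH]; simpl; [tauto|].
  intros [<-|Hb].
  - destruct l; [lra|]. apply Rmax_l.
  - destruct l; [destruct Hb|]. eapply Rle_trans; [apply IH; auto|]. apply Rmax_r.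
Qed.

Lemma inf_list_le (f : B -> R) l b : In b l -> inf_list f l <= f b.
Proof.
  induction l as [|c l IH]; simpl; [tauto|].
  intros [<-|Hb].
  - destruct l; [lra|]. apply Rmin_l.
  - destruct l; [destruct Hb|]. eapply Rle_trans; [|apply IH; auto]. apply Rmin_r.
Qed.

Lemma sup_list_le (f : B -> R) l r :
  0 <= r -> (forall b, In b l -> f b <= r) -> sup_list f l <= r.
Proof. apply (sup_list_closed (fun s => s <= r)). Qed.

Lemma inf_list_ge (f : B -> R) l r :
  r <= 1 -> (forall b, In b l -> r <= f b) -> r <= inf_list f l.
Proof. apply (inf_list_closed (fun s => r <= s)). Qed.

Lemma inf_list_lt (f : B -> R) l r :
  r <= 1 -> inf_list f l < r -> exists b, In b l /\ f b < r.
Proof.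
  intros Hr. apply (inf_list_closed (fun s => s < r -> exists b, In b l /\ f b < r)).
  - lra.
  - eauto.
Qed.

Lemma sup_list_mono (f g : B -> R) l :
  (forall b, f b <= g b) -> sup_list f l <= sup_list g l.
Proof.
  intros H. induction l as [|b l IH]; simpl; [lra|].
  destruct l; auto. unfold Rmax in *. repeat destruct Rle_dec; specialize (H b); lra.
Qed.

Lemma inf_list_mono (f g : B -> R) l :
  (forall b, f b <= g b) -> inf_list f l <= inf_list g l.
Proof.
  intros H. induction l as [|b l IH]; simpl; [lra|].
  destruct l; auto. unfold Rmin in *. repeat destruct Rle_dec; specialize (H b); lra.
Qed.

End ListExtrema.

Definition directed_hausdorff {B : Type} (d : B -> B -> R) (A C : list B) : R :=
  sup_list (fun a => inf_list (fun c => d a c) C) A.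

Lemma hausdorff_directed {B : Type} (d : B -> B -> R) A C :
  hausdorff d A C = Rmax (directed_hausdorff d A C) (directed_hausdorff d C A).
Proof. reflexivity. Qed.

Lemma directed_hausdorff_ge {B : Type} (d : B -> B -> R) A C a :
  In a A -> inf_list (fun c => d a c) C <= directed_hausdorff d A C.
Proof. apply (sup_list_ge (fun a => inf_list (fun c => d a c) C)). Qed.

Definition dyadic (r : R) : Prop := r = 0 \/ exists k, r = / 2 ^ k.

Lemma dyadic_dec01 P : dyadic (dec01 P).
Proof.
  unfold dec01; destruct excluded_middle_informative;
    [left | right; exists 0%nat; simpl]; lra.
Qed.

Lemma dyadic_bounds r : dyadic r -> 0 <= r <= 1.
Proof.
  intros [->|[k ->]]; [lra|]. split.
  - left; apply Rinv_0_lt_compat, pow_lt; lra.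
  - rewrite <- Rinv_1. apply Rinv_le_contravar; [lra|].
    apply pow_R1_Rle; lra.
Qed.

Lemma dyadic_lt_pow2 r i : dyadic r -> r < / 2 ^ i -> r <= / 2 ^ S i.
Proof.
  intros [->|[k ->]] Hlt.
  - left; apply Rinv_0_lt_compat, pow_lt; lra.
  - apply Rinv_le_contravar; [apply pow_lt; lra|].
    apply Rle_pow; [lra|].
    destruct (Nat.le_gt_cases k i) as [Hki|]; [|lia]. exfalso.
    enough (/ 2 ^ i <= / 2 ^ k) by lra.
    apply Rinv_le_contravar; [apply pow_lt; lra|apply Rle_pow; [lra|auto]].
Qed.

Lemma dyadic_strict_decrease (s : nat -> R) :
  (forall i, dyadic (s i)) -> (forall i, s (S i) < s i) -> forall i, s i <= / 2 ^ i.
Proof.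
  intros Hd Hs i. induction i as [|i IH].
  - simpl; rewrite Rinv_1. apply dyadic_bounds, Hd.
  - apply dyadic_lt_pow2; [apply Hd|]. specialize (Hs i). lra.
Qed.

Definition vanishes (s : nat -> R) : Prop :=
  forall eps, 0 < eps -> exists i, s i < eps.

Lemma vanishes_inv_pow2 : vanishes (fun i => / 2 ^ i).
Proof.
  intros eps He.
  destruct (pow_lt_1_zero (/ 2) ltac:(rewrite Rabs_pos_eq; lra) eps He) as [N HN].
  exists N. specialize (HN N (le_n N)).
  rewrite Rabs_pos_eq, pow_inv in HN; [exact HN|].
  apply pow_le; lra.
Qed.

Lemma vanishes_le (s t : nat -> R) :
  (forall i, s i <= t i) -> vanishes t -> vanishes s.
Proof. intros Hst Ht eps He. destruct (Ht eps He) as [i Hi]. exists i. specialize (Hst i). lra. Qed.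

Section Approximants.
Context {Sigma X : Type} (beta : prechart Sigma X).

Lemma Phi_iter_dyadic i : forall u v, dyadic (Phi_iter beta i u v).
Proof.
  induction i as [|i IH]; intros u v; simpl; [apply dyadic_dec01|].
  assert (Hlift : forall m n : (Sigma * X) + nat, dyadic (lift (Phi_iter beta i) m n)).
  { intros [[a u']|w] [[b v']|w']; simpl; try apply dyadic_dec01.
    destruct excluded_middle_informative.
    - destruct (IH u' v') as [->|[k ->]]; [left; lra|right; exists (S k); simpl].
      rewrite Rinv_mult. lra.
    - right; exists 0%nat; simpl; lra. }
  unfold Phi, hausdorff, Rmax; destruct Rle_dec;
    apply sup_list_closed; try (left; reflexivity);
    intros; apply inf_list_closed; auto; right; exists 0%nat; simpl; lra.
Qed.

Lemma Phi_iter_refl i : forall z, Phi_iter beta i z z = 0.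
Proof.
  induction i as [|i IH]; intros z; simpl.
  - unfold top_metric, dec01; destruct excluded_middle_informative; congruence.
  - apply Rle_antisym; [|apply (dyadic_bounds _ (Phi_iter_dyadic (S i) z z))].
    assert (Hzero : forall m : (Sigma * X) + nat, lift (Phi_iter beta i) m m = 0).
    { intros [[a w]|w]; simpl; unfold dec01; destruct excluded_middle_informative;
        try congruence; rewrite ?IH; lra. }
    unfold Phi; rewrite hausdorff_directed.
    apply Rmax_lub; apply sup_list_le; try lra; intros m Hm;
      rewrite <- (Hzero m); apply inf_list_le; exact Hm.
Qed.

Lemma Phi_monotone (d d' : X -> X -> R) u v :
  (forall p q, d p q <= d' p q) -> Phi beta d u v <= Phi beta d' u v.
Proof.
  intros H.
  assert (Hlift : forall m n : (Sigma * X) + nat, lift d m n <= lift d' m n).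
  { intros [[a p]|w] [[b q]|w']; simpl; try lra.
    destruct excluded_middle_informative; [specialize (H p q)|]; lra. }
  unfold Phi; rewrite !hausdorff_directed.
  apply Rmax_lub; [eapply Rle_trans; [|apply Rmax_l] | eapply Rle_trans; [|apply Rmax_r]];
    apply sup_list_mono; intros; apply inf_list_mono; auto.
Qed.

Lemma Phi_iter_decreasing i : forall u v, Phi_iter beta (S i) u v <= Phi_iter beta i u v.
Proof.
  induction i as [|i IH]; intros u v.
  - change (Phi_iter beta 0 u v) with (dec01 (u = v)). unfold dec01.
    destruct excluded_middle_informative as [<-|].
    + rewrite Phi_iter_refl; lra.
    + apply (dyadic_bounds _ (Phi_iter_dyadic 1 u v)).
  - apply Phi_monotone, IH.
Qed.

Definition Phi_vanishes (u v : X) : Prop := vanishes (fun i => Phi_iter beta i u v).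

Definition lift_vanishes (A C : list ((Sigma * X) + nat)) : Prop :=
  vanishes (fun i => directed_hausdorff (lift (Phi_iter beta i)) A C).

Lemma lift_vanishes_var A C v : In (inr v) A -> lift_vanishes A C -> In (inr v) C.
Proof.
  intros Hin H. destruct (H 1 ltac:(lra)) as [i Hi].
  pose proof (directed_hausdorff_ge (lift (Phi_iter beta i)) A C _ Hin).
  destruct (inf_list_lt (fun c => lift (Phi_iter beta i) (inr v) c) C 1) as [c [Hc Hlt]]; [lra..|].
  destruct c as [[b w]|w]; simpl in Hlt; unfold dec01 in Hlt;
    destruct excluded_middle_informative; congruence || lra.
Qed.

Lemma lift_gap (a : Sigma) x' (c : (Sigma * X) + nat) :
  (forall y', c = inl (a, y') -> ~ Phi_vanishes x' y') ->
  exists eps, 0 < eps <= 1 /\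
    forall i, eps <= lift (Phi_iter beta i) (inl (a, x')) c.
Proof.
  intros H. destruct c as [[b w]|w]; simpl.
  - destruct excluded_middle_informative as [<-|]; [|exists 1; split; [lra|intros; lra]].
    specialize (H w eq_refl). unfold Phi_vanishes, vanishes in H.
    apply not_all_ex_not in H as [eps H].
    apply imply_to_and in H as [Heps H].
    exists (Rmin (eps / 2) 1). split; [split; [apply Rmin_pos|apply Rmin_r]; lra|].
    intros i. pose proof (Rmin_l (eps / 2) 1).
    destruct (Rle_dec eps (Phi_iter beta i x' w)); [lra|].
    exfalso; apply H; exists i; lra.
  - exists 1; split; [lra|]. intros; unfold dec01.
    destruct excluded_middle_informative; [discriminate|lra].
Qed.

Lemma lift_gap_list (a : Sigma) x' C :
  (forall y', In (inl (a, y')) C -> ~ Phi_vanishes x' y') ->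
  exists eps, 0 < eps <= 1 /\
    forall i c, In c C -> eps <= lift (Phi_iter beta i) (inl (a, x')) c.
Proof.
  induction C as [|c C IH]; intros H.
  - exists 1; split; [lra|]. intros _ _ [].
  - destruct IH as [e1 [He1 H1]]; [intros y' Hy; apply H; simpl; auto|].
    destruct (lift_gap a x' c) as [e2 [He2 H2]]; [intros y' ->; apply H; simpl; auto|].
    exists (Rmin e1 e2).
    pose proof (Rmin_l e1 e2); pose proof (Rmin_r e1 e2).
    split; [split; [apply Rmin_pos|]; lra|].
    intros i c' [<-|Hc']; [specialize (H2 i)|specialize (H1 i c' Hc')]; lra.
Qed.

Lemma lift_vanishes_match A C a x' : In (inl (a, x')) A -> lift_vanishes A C ->
  exists y', In (inl (a, y')) C /\ Phi_vanishes x' y'.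
Proof.
  intros Hin H. apply NNPP; intro Hn.
  destruct (lift_gap_list a x' C) as [eps [He Hgap]]; [intros y' Hy HQ; apply Hn; eauto|].
  destruct (H eps ltac:(lra)) as [i Hi].
  pose proof (directed_hausdorff_ge (lift (Phi_iter beta i)) A C _ Hin).
  pose proof (inf_list_ge (fun c => lift (Phi_iter beta i) (inl (a, x')) c) C eps ltac:(lra) (Hgap i)).
  lra.
Qed.

Lemma Phi_vanishes_lift u v :
  Phi_vanishes u v -> lift_vanishes (beta u) (beta v) /\ lift_vanishes (beta v) (beta u).
Proof.
  intros H.
  assert (Hshift : forall s : nat -> R, (forall i, s i <= Phi_iter beta (S i) u v) -> vanishes s).
  { intros s Hs eps He. destruct (H eps He) as [[|j] Hj].
    - exists 0%nat. pose proof (Phi_iter_decreasing 0 u v). specialize (Hs 0%nat). lra.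
    - exists j. specialize (Hs j). lra. }
  split; apply Hshift; intros i; simpl; unfold Phi; rewrite hausdorff_directed;
    [apply Rmax_l|apply Rmax_r].
Qed.

Lemma Phi_vanishes_step u v : Phi_vanishes u v ->
  (forall w : nat, In (inr w) (beta u) <-> In (inr w) (beta v)) /\
  (forall a u', trans beta u a u' -> exists v', trans beta v a v' /\ Phi_vanishes u' v') /\
  (forall a v', trans beta v a v' -> exists u', trans beta u a u' /\ Phi_vanishes v' u').
Proof.
  intros H. destruct (Phi_vanishes_lift u v H) as [Huv Hvu].
  split; [|split].
  - intros w; split; intros; eapply lift_vanishes_var; eauto.
  - intros a u' Ht. eapply lift_vanishes_match; eauto.
  - intros a v' Ht. eapply lift_vanishes_match; eauto.
Qed.

(* Symmetrised so that the symmetry of Phi^(i) never has to be proved. *)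
Lemma Phi_vanishes_bisimulation :
  bisimulation beta (fun u v => Phi_vanishes u v \/ Phi_vanishes v u).
Proof.
  intros u v [H|H].
  - destruct (Phi_vanishes_step u v H) as [Hv [Hf Hb]]. split; [auto|split].
    + intros a u' Ht; destruct (Hf a u' Ht) as [v' [? ?]]; eauto.
    + intros a v' Ht; destruct (Hb a v' Ht) as [u' [? ?]]; eauto.
  - destruct (Phi_vanishes_step v u H) as [Hv [Hf Hb]].
    split; [intros w; rewrite Hv; tauto|split].
    + intros a u' Ht; destruct (Hb a u' Ht) as [v' [? ?]]; eauto.
    + intros a v' Ht; destruct (Hf a v' Ht) as [u' [? ?]]; eauto.
Qed.

Lemma Phi_vanishes_bisimilar u v : Phi_vanishes u v -> bisimilar beta u v.
Proof.
  intros H. exists (fun u v => Phi_vanishes u v \/ Phi_vanishes v u).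
  split; [apply Phi_vanishes_bisimulation | left; exact H].
Qed.

End Approximants.

Theorem mainTheorem8 (Sigma X : Type) (beta : prechart Sigma X)
  (Hlf : locally_finite beta) (x y : X) (Hnb : ~ bisimilar beta x y) :
  exists i : nat, Phi_iter beta i x y = Phi_iter beta (S i) x y.
Proof.
  apply NNPP; intro Hn. apply Hnb, Phi_vanishes_bisimilar.
  assert (Hstrict : forall i, Phi_iter beta (S i) x y < Phi_iter beta i x y).
  { intro i. destruct (Rle_lt_or_eq_dec _ _ (Phi_iter_decreasing beta i x y)); auto.
    exfalso; apply Hn; eauto. }
  apply (vanishes_le _ _ (dyadic_strict_decrease _ (fun i => Phi_iter_dyadic beta i x y) Hstrict)).
  apply vanishes_inv_pow2.
Qed.
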